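(* In the aggregative setting described in the context, suppose assumptions (i)–(iv) there hold, and define $L_t\triangleq\frac{\mu\max_{i}L_{gi}}{\mu^2+L_a^2}\Big(1-\frac{L_a}{\sqrt{\mu^2+L_a^2}}\Big)^{-1}$. Then for each $i\in\{1,\dots,n\}$ and every $y_i\in\mathcal{R}_i$, $$\|T_i(y_i,z_1)-T_i(y_i,z_2)\|\le L_t\|z_1-z_2\|\quad\text{for all }z_1,z_2\in\mathbb{R}^d.$$
   Context: Aggregative game: $n$ players, each chooses $x_i\in\mathbb{R}^d$; player $i$ has cost $f_i(x_i,\bar x)+r_i(x_i)$ where $\bar x=\sum_jx_j$ and $f_i(x_i,\bar x)=\mathbb{E}[\psi_i(x_i,x_i+\bar x_{-i};\xi_i)]$, $\bar x_{-i}=\sum_{j\ne i}x_j$. Assumptions, for each $i$: (i) $r_i$ is lower semicontinuous and convex with compact effective domain $\mathcal{R}_i$; (ii) for any $y\in\mathbb{R}^d$, $x_i\mapsto f_i(x_i,x_i+y)$ is twice continuously differentiable and convex on $\mathcal{R}_i$; (iii) with $g_i(x_i,y)$ denoting the gradient at $x_i$ of $x_i\mapsto f_i(x_i,x_i+y)$, there is $L_a>0$ such that for any $y\in\mathbb{R}^d$, $\|g_i(x_i,y)-g_i(x_i',y)\|\le L_a\|x_i-x_i'\|$ for $x_i,x_i'\in\mathcal{R}_i$; (iv) for any $x_i\in\mathcal{R}_i$, $\|g_i(x_i,y_1)-g_i(x_i,y_2)\|\le L_{gi}\|y_1-y_2\|$ for all $y_1,y_2\in\mathbb{R}^d$. Fix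 $\mu>0$. For $y_i\in\mathcal{R}_i$, $z\in\mathbb{R}^d$: $T_i(y_i,z)\triangleq\arg\min_{x_i\in\mathbb{R}^d}\big[f_i(x_i,x_i+z-y_i)+r_i(x_i)+\frac\mu2\|x_i-y_i\|^2\big]$ (uniquely defined). *)

From HB Require Import structures.
From mathcomp Require Import all_boot all_order all_algebra.
From mathcomp Require Import all_classical all_reals all_analysis.
Set Implicit Arguments. Unset Strict Implicit. Unset Printing Implicit Defensive.
Import Order.TTheory GRing.Theory Num.Theory.
Import numFieldNormedType.Exports.
Local Open Scope classical_set_scope.
Local Open Scope ring_scope.

Section Defs.
Variables (R : realType) (d : nat).

Definition dotv (u v : 'rV[R]_d) : R := \sum_(j < d) u 0 j * v 0 j.
Definition enorm (v : 'rV[R]_d) : R := Num.sqrt (\sum_(j < d) v 0 j ^+ 2).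

Definition edom (r : 'rV[R]_d -> \bar R) : set 'rV[R]_d :=
  [set x | (r x < +oo)%E].

Definition econvex (r : 'rV[R]_d -> \bar R) : Prop :=
  forall (x y : 'rV[R]_d) (t : R), 0 <= t <= 1 ->
    let w := t *: x + (1 - t) *: y in
    (r w <= t%:E * r x + (1 - t)%:E * r y)%E.

Definition convex_on (A : set 'rV[R]_d) (h : 'rV[R]_d -> R) : Prop :=
  forall x y (t : R), A x -> A y -> 0 <= t <= 1 ->
    h (t *: x + (1 - t) *: y) <= t * h x + (1 - t) * h y.

Definition C2_on (A : set 'rV[R]_d) (h : 'rV[R]_d -> R) : Prop :=
  exists U : set 'rV[R]_d, [/\ open U, A `<=` U,
    (forall x, U x -> differentiable h x),
    (forall x v, U x -> differentiable (fun x' => 'd h x' v) x) &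
    (forall x v w, U x ->
        {for x, continuous (fun x' => 'd (fun x'' => 'd h x'' v) x' w)})].

Definition prox_obj (f : 'rV[R]_d -> 'rV[R]_d -> R) (r : 'rV[R]_d -> \bar R)
  (mu : R) (y z x : 'rV[R]_d) : \bar R :=
  let q := f x (x + z - y) + mu / 2 * enorm (x - y) ^+ 2 in
  (q%:E + r x)%E.

End Defs.

From HB Require Import structures.
From mathcomp Require Import all_boot all_order all_algebra.
From mathcomp Require Import all_classical all_reals all_analysis.
From mathcomp Require Import ring lra.
Set Implicit Arguments. Unset Strict Implicit. Unset Printing Implicit Defensive.
Import Order.TTheory GRing.Theory Num.Theory.
Import numFieldNormedType.Exports.
Local Open Scope classical_set_scope.
Local Open Scope ring_scope.

(* Write x_k = T_i(y, z_k) and h_a(x) = f_i(x, x + a).  The first-order optimality condition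
   of the proximal problem at x_1 (tested against x_2) and at x_2 (tested against x_1) add up,
   the values of r_i cancelling, to
     mu |x_1 - x_2|^2 <= <g_i(x_2, z_2 - y) - g_i(x_1, z_1 - y), x_1 - x_2>.
   Monotonicity of the gradient of the convex h_(z_1 - y) removes the change in the first
   argument of g_i, and (iv) bounds the change in the second one, so
   mu |x_1 - x_2| <= L_gi |z_1 - z_2|.  The constant L_gi / mu is at most L_t. *)

Section Euclidean.
Variables (R : realType) (d : nat).
Implicit Types (u v w : 'rV[R]_d) (a t : R).

Lemma dotvC u v : dotv u v = dotv v u.
Proof. by apply: eq_bigr => j _; rewrite mulrC. Qed.

Lemma dotvDl u v w : dotv (u + v) w = dotv u w + dotv v w.
Proof. by rewrite /dotv -big_split; apply: eq_bigr => j _; rewrite mxE mulrDl. Qed.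

Lemma dotvNl u v : dotv (- u) v = - dotv u v.
Proof. by rewrite /dotv -sumrN; apply: eq_bigr => j _; rewrite mxE mulNr. Qed.

Lemma dotvZl a u v : dotv (a *: u) v = a * dotv u v.
Proof. by rewrite /dotv mulr_sumr; apply: eq_bigr => j _; rewrite mxE mulrA. Qed.

Lemma dotvBl u v w : dotv (u - v) w = dotv u w - dotv v w.
Proof. by rewrite dotvDl dotvNl. Qed.

Lemma dotvDr u v w : dotv u (v + w) = dotv u v + dotv u w.
Proof. by rewrite dotvC dotvDl !(dotvC u). Qed.

Lemma dotvNr u v : dotv u (- v) = - dotv u v.
Proof. by rewrite dotvC dotvNl dotvC. Qed.

Lemma dotvZr a u v : dotv u (a *: v) = a * dotv u v.
Proof. by rewrite dotvC dotvZl dotvC. Qed.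

Lemma dotvBr u v w : dotv u (v - w) = dotv u v - dotv u w.
Proof. by rewrite dotvDr dotvNr. Qed.

Lemma dotvv u : dotv u u = enorm u ^+ 2.
Proof.
rewrite /enorm sqr_sqrtr; last by apply: sumr_ge0 => j _; exact: sqr_ge0.
by apply: eq_bigr => j _; rewrite expr2.
Qed.

Lemma enorm_ge0 u : 0 <= enorm u.
Proof. exact: sqrtr_ge0. Qed.

Lemma enormN u : enorm (- u) = enorm u.
Proof. by congr Num.sqrt; apply: eq_bigr => j _; rewrite mxE sqrrN. Qed.

Lemma enorm_sqrDZ u v t :
  enorm (u + t *: v) ^+ 2 = enorm u ^+ 2 + 2 * t * dotv u v + t ^+ 2 * enorm v ^+ 2.
Proof. by rewrite -!dotvv dotvDl !dotvDr !dotvZl !dotvZr (dotvC v u); ring. Qed.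

Lemma convex_comb_shift u v t : t *: u + (1 - t) *: v = v + t *: (u - v).
Proof. by rewrite scalerBl scale1r scalerBr addrCA addrA. Qed.

(* No Cauchy-Schwarz needed: expand [0 <= |mu w - p|^2] and use the hypothesis twice. *)
Lemma enorm_le_of_dotv (mu : R) w p :
  0 < mu -> mu * dotv w w <= dotv p w -> mu * enorm w <= enorm p.
Proof.
move=> mu_gt0 wp.
have : 0 <= dotv (mu *: w - p) (mu *: w - p) by rewrite dotvv sqr_ge0.
rewrite !(dotvBl, dotvBr, dotvZl, dotvZr) (dotvC w p) !dotvv in wp * => sq_ge0.
have := enorm_ge0 w; have := enorm_ge0 p; nra.
Qed.

End Euclidean.

Lemma nbhs_right0_le1 (R : realType) : \forall t \near (0 : R)^'+, 0 < t <= 1.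
Proof.
near=> t; apply/andP; split.
- by near: t; exact: nbhs_right_gt.
- by near: t; exact: nbhs_right_le ltr01.
Unshelve. all: by end_near. Qed.

Section DifferenceQuotients.
Variables (R : realType) (d : nat) (h : 'rV[R]_d -> R) (x v : 'rV[R]_d).
Hypothesis dh : differentiable h x.

Lemma diff_quotient_cvg_right :
  (fun t => (h (x + t *: v) - h x) / t) @ (0 : R)^'+ --> 'd h x v.
Proof.
rewrite -deriveE //; apply: cvg_dnbhs_at_right.
have -> : (fun t => (h (x + t *: v) - h x) / t) =
          (fun t => t^-1 *: ((h \o shift x) (t *: v) - h x)).
  by apply/funext => t /=; rewrite (addrC x) mulrC.
exact: (diff_derivable (v := v) dh).
Qed.

Lemma diff_ge_of_quotient_ge c K :
  (forall t, 0 < t <= 1 -> c <= (h (x + t *: v) - h x) / t + K * t) -> c <= 'd h x v.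
Proof.
move=> quot_ge.
have Kt_cvg : (fun t => K * t) @ (0 : R)^'+ --> 0.
  apply: cvg_at_right_filter; rewrite -[X in _ --> X](mulr0 K).
  by apply: cvgM; [exact: cvg_cst | exact: cvg_id].
have := cvgD diff_quotient_cvg_right Kt_cvg; rewrite addr0 => cvg_sum.
apply: (cvgr_to_ge (cvg_sum _)); apply: filterS (nbhs_right0_le1 R); exact: quot_ge.
Qed.

Lemma diff_le_of_quotient_le c :
  (forall t, 0 < t <= 1 -> (h (x + t *: v) - h x) / t <= c) -> 'd h x v <= c.
Proof.
move=> quot_le; apply: (cvgr_to_le diff_quotient_cvg_right).
apply: filterS (nbhs_right0_le1 R); exact: quot_le.
Qed.

End DifferenceQuotients.

Lemma convex_diff_le (R : realType) (d : nat) (D : set 'rV[R]_d) (h : 'rV[R]_d -> R) x1 x2 :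
  convex_on D h -> D x1 -> D x2 -> differentiable h x1 ->
  'd h x1 (x2 - x1) <= h x2 - h x1.
Proof.
move=> h_convex Dx1 Dx2 dh; apply: diff_le_of_quotient_le => // t /andP[t_gt0 t_le1].
have t01 : 0 <= t <= 1 by rewrite (ltW t_gt0) t_le1.
have h_le := h_convex x2 x1 t Dx2 Dx1 t01.
rewrite convex_comb_shift in h_le.
by rewrite ler_pdivrMr //; lra.
Qed.

Lemma convex_grad_monotone (R : realType) (d : nat) (D : set 'rV[R]_d) (h : 'rV[R]_d -> R)
    x1 x2 G1 G2 :
  convex_on D h -> D x1 -> D x2 -> differentiable h x1 -> differentiable h x2 ->
  (forall v, 'd h x1 v = dotv G1 v) -> (forall v, 'd h x2 v = dotv G2 v) ->
  0 <= dotv (G1 - G2) (x1 - x2).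
Proof.
move=> h_convex Dx1 Dx2 dh1 dh2 grad1 grad2.
have := convex_diff_le h_convex Dx1 Dx2 dh1; rewrite grad1.
have := convex_diff_le h_convex Dx2 Dx1 dh2; rewrite grad2.
rewrite -(opprB x1 x2) dotvNr dotvBl; lra.
Qed.

Section ProxStep.
Variables (R : realType) (d : nat) (r : 'rV[R]_d -> \bar R) (mu : R) (y : 'rV[R]_d).
Hypotheses (r_gt_ninfty : forall x, r x != -oo%E) (r_convex : econvex r).

Definition prox_cost (phi : 'rV[R]_d -> R) x : \bar R :=
  ((phi x + mu / 2 * enorm (x - y) ^+ 2)%:E + r x)%E.

Definition prox_minimizer phi xs := forall x, (prox_cost phi xs <= prox_cost phi x)%E.

Lemma prox_objE (f : 'rV[R]_d -> 'rV[R]_d -> R) z x :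
  prox_obj f r mu y z x = prox_cost (fun x => f x (x + (z - y))) x.
Proof. by rewrite /prox_obj /prox_cost addrA. Qed.

Lemma edom_fineK x : edom r x -> (fine (r x))%:E = r x.
Proof. by move=> rx; apply: fineK; rewrite fin_numE r_gt_ninfty (lt_eqF rx). Qed.

Lemma prox_minimizer_edom phi xs : edom r y -> prox_minimizer phi xs -> edom r xs.
Proof.
move=> ry /(_ y); rewrite /prox_cost -(edom_fineK ry) /edom /=.
by case: (r xs) => [rx| |] //=; rewrite leNgt ltey.
Qed.

Lemma prox_minimizer_variational phi xs x :
  prox_minimizer phi xs -> edom r xs -> edom r x -> differentiable phi xs ->
  - mu * dotv (xs - y) (x - xs) - (fine (r x) - fine (r xs)) <= 'd phi xs (x - xs).
Proof.
move=> xs_min rxs rx dphi.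
(* Compare the cost at [xs] with the cost at [xs + t (x - xs)], where [r] is bounded by
   convexity; the [t^2] term of the squared distance is the [K t] error. *)
apply: (diff_ge_of_quotient_ge dphi (K := mu / 2 * enorm (x - xs) ^+ 2)).
move=> t /andP[t_gt0 t_le1].
have t01 : 0 <= t <= 1 by rewrite (ltW t_gt0) t_le1.
have r_le := r_convex x xs t01; rewrite /= convex_comb_shift in r_le.
have cost_le := le_trans (xs_min (xs + t *: (x - xs))) (leeD2l _ r_le).
rewrite /prox_cost -(edom_fineK rx) -(edom_fineK rxs) -!EFinM -!EFinD lee_fin in cost_le.
rewrite [xs + _ - y]addrAC enorm_sqrDZ in cost_le.
rewrite -(ler_pM2r t_gt0) [X in _ <= X]mulrDl divfK ?gt_eqF //; nra.
Qed.

Lemma prox_minimizers_dotv phi1 phi2 x1 x2 G1 G2 :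
  prox_minimizer phi1 x1 -> prox_minimizer phi2 x2 -> edom r x1 -> edom r x2 ->
  differentiable phi1 x1 -> differentiable phi2 x2 ->
  (forall v, 'd phi1 x1 v = dotv G1 v) -> (forall v, 'd phi2 x2 v = dotv G2 v) ->
  mu * dotv (x1 - x2) (x1 - x2) <= dotv (G2 - G1) (x1 - x2).
Proof.
move=> x1_min x2_min rx1 rx2 dphi1 dphi2 grad1 grad2.
have vi1 := prox_minimizer_variational x1_min rx1 rx2 dphi1.
have vi2 := prox_minimizer_variational x2_min rx2 rx1 dphi2.
rewrite grad1 -(opprB x1 x2) !dotvNr in vi1; rewrite grad2 in vi2.
have w_sq : dotv (x1 - y) (x1 - x2) - dotv (x2 - y) (x1 - x2) = dotv (x1 - x2) (x1 - x2).
  by rewrite -dotvBl opprB addrA subrK.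
by rewrite -w_sq (dotvBl G2); lra.
Qed.

Variables (h : 'rV[R]_d -> 'rV[R]_d -> R) (G : 'rV[R]_d -> 'rV[R]_d -> 'rV[R]_d) (L : R).
Hypotheses (h_convex : forall a, convex_on (edom r) (h a))
  (h_diff : forall a {x}, edom r x -> differentiable (h a) x)
  (h_grad : forall a {x} v, edom r x -> 'd (h a) x v = dotv (G x a) v)
  (G_lip : forall x a1 a2, edom r x -> enorm (G x a1 - G x a2) <= L * enorm (a1 - a2)).

Lemma prox_minimizer_lipschitz a1 a2 x1 x2 :
  0 < mu -> prox_minimizer (h a1) x1 -> prox_minimizer (h a2) x2 ->
  edom r x1 -> edom r x2 -> mu * enorm (x1 - x2) <= L * enorm (a1 - a2).
Proof.
move=> mu_gt0 x1_min x2_min rx1 rx2.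
have prox_ineq := prox_minimizers_dotv x1_min x2_min rx1 rx2
  (h_diff a1 rx1) (h_diff a2 rx2) (h_grad a1 ^~ rx1) (h_grad a2 ^~ rx2).
have mono := convex_grad_monotone (h_convex a1) rx1 rx2
  (h_diff a1 rx1) (h_diff a1 rx2) (h_grad a1 ^~ rx1) (h_grad a1 ^~ rx2).
set p := G x2 a2 - G x2 a1.
have w_p : mu * dotv (x1 - x2) (x1 - x2) <= dotv p (x1 - x2).
  have split_G : G x2 a2 - G x1 a1 = p - (G x1 a1 - G x2 a1) by rewrite opprB addrA subrK.
  by move: prox_ineq; rewrite split_G (dotvBl p); lra.
apply: le_trans (enorm_le_of_dotv mu_gt0 w_p) _.
by rewrite -(enormN (a1 - a2)) opprB; exact: G_lip.
Qed.

End ProxStep.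

Lemma div_le_prox_lipschitz_const (R : realType) (mu La M : R) :
  0 < mu -> 0 < La -> 0 <= M ->
  M / mu <= mu * M / (mu ^+ 2 + La ^+ 2) * (1 - La / Num.sqrt (mu ^+ 2 + La ^+ 2))^-1.
Proof.
move=> mu_gt0 La_gt0 M_ge0.
set s := Num.sqrt _.
have s_sq : s ^+ 2 = mu ^+ 2 + La ^+ 2 by rewrite sqr_sqrtr // addr_ge0 ?sqr_ge0.
have s_ge0 : 0 <= s := sqrtr_ge0 _.
have La_lt_s : La < s by nra.
have s_gt0 : 0 < s := lt_trans La_gt0 La_lt_s.
have gap_gt0 : 0 < s - La by rewrite subr_gt0.
have -> : mu * M / (mu ^+ 2 + La ^+ 2) * (1 - La / s)^-1 = mu * M / (s * (s - La)).
  by rewrite -s_sq; field; rewrite !gt_eqF.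
have -> : M / mu = mu * M / mu ^+ 2 by field; rewrite gt_eqF.
apply: ler_wpM2l; first by rewrite mulr_ge0 // ltW.
(* [s (s - La) <= s^2 - La^2 = mu^2] because [La <= s]. *)
rewrite lef_pV2 ?posrE ?mulr_gt0 ?exprn_gt0 //; nra.
Qed.

Theorem lemma9 (R : realType) (n d : nat)
  (f : 'I_n -> 'rV[R]_d -> 'rV[R]_d -> R)
  (r : 'I_n -> 'rV[R]_d -> \bar R)
  (g : 'I_n -> 'rV[R]_d -> 'rV[R]_d -> 'rV[R]_d)
  (La : R) (Lg : 'I_n -> R) (mu : R)
  (T : 'I_n -> 'rV[R]_d -> 'rV[R]_d -> 'rV[R]_d) :
  (* (i) r_i proper, lsc, convex, compact effective domain *)
  (forall i x, r i x != -oo%E) ->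
  (forall i, lower_semicontinuous (r i)) ->
  (forall i, econvex (r i)) ->
  (forall i, compact (edom (r i))) ->
  (* (ii) x_i |-> f_i(x_i, x_i + y) is C^2 and convex on R_i *)
  (forall i y, C2_on (edom (r i)) (fun x => f i x (x + y))) ->
  (forall i y, convex_on (edom (r i)) (fun x => f i x (x + y))) ->
  (* g_i(x_i, y) is the gradient at x_i of x_i |-> f_i(x_i, x_i + y) *)
  (forall i y x v, edom (r i) x ->
     'd (fun x' => f i x' (x' + y)) x v = dotv (g i x y) v) ->
  (* (iii) *)
  0 < La ->
  (forall i y x x', edom (r i) x -> edom (r i) x' ->
     enorm (g i x y - g i x' y) <= La * enorm (x - x')) ->
  (* (iv) *)
  (forall i x y1 y2, edom (r i) x ->
     enorm (g i x y1 - g i x y2) <= Lg i * enorm (y1 - y2)) ->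
  0 < mu ->
  (* T_i(y_i, z) is the (unique) minimizer of the proximal objective *)
  (forall i y z x, edom (r i) y ->
     (prox_obj (f i) (r i) mu y z (T i y z) <= prox_obj (f i) (r i) mu y z x)%E) ->
  let Lt := mu * (\big[Num.max/0]_(j < n) Lg j) / (mu ^+ 2 + La ^+ 2)
            * (1 - La / Num.sqrt (mu ^+ 2 + La ^+ 2))^-1 in
  forall i y, edom (r i) y ->
  forall z1 z2 : 'rV[R]_d,
    enorm (T i y z1 - T i y z2) <= Lt * enorm (z1 - z2).
Proof.
move=> r_gt_ninfty _ r_convex _ f_C2 f_convex f_grad La_gt0 _ g_lip mu_gt0 T_min Lt
  i y ry z1 z2.
have f_diff a x : edom (r i) x -> differentiable (fun x' => f i x' (x' + a)) x.
  by case: (f_C2 i a) => U [_ domU diffU _ _] /domU; exact: diffU.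
have T_prox z : prox_minimizer (r i) mu y (fun x => f i x (x + (z - y))) (T i y z).
  by move=> x; rewrite -!prox_objE; exact: T_min.
have T_dom z : edom (r i) (T i y z) := prox_minimizer_edom (r_gt_ninfty i) ry (T_prox z).
have := prox_minimizer_lipschitz (r_gt_ninfty i) (r_convex i) (f_convex i) f_diff
  (f_grad i) (g_lip i) mu_gt0 (T_prox z1) (T_prox z2) (T_dom z1) (T_dom z2).
have -> : z1 - y - (z2 - y) = z1 - z2 by rewrite opprB addrA subrK.
rewrite -ler_pdivlMl // mulrA => T_lip; apply: le_trans T_lip _.
rewrite ler_wpM2r ?enorm_ge0 //.
have Lmax_ge0 : 0 <= \big[Num.max/0]_(j < n) Lg j := bigmax_ge_id _ _ _ _.
apply: le_trans (div_le_prox_lipschitz_const mu_gt0 La_gt0 Lmax_ge0).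
by rewrite mulrC ler_pM2r ?invr_gt0 // le_bigmax.
Qed.
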